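(* Let $A$ be a $DP$ algebra and let $\mathrm{Ab}_A:\mathbf{DPAlg}_R/A\to\mathbf{Mod}_A$ be the abelianization functor, i.e. the left adjoint of the inclusion of abelian group objects of $\mathbf{DPAlg}_R/A$ (identified with left $U(A)$-modules). Then for every $DP$ algebra map $f:B\to A$, $$\mathrm{Ab}_A(f:B\to A)\cong U(A)\otimes_{U(B)}\Omega^{DP}_{B/R},$$ where $U(A)$ is a right $U(B)$-module via the ring map $U(B)\to U(A)$, $b\otimes u\mapsto f(b)\otimes u$, induced by $f$. In particular $\Omega^{DP}_{A/R}=\mathrm{Ab}_A(\mathrm{id}_A)$.
   Context: Fix a commutative unital ring $R$. An ''algebra'' means a commutative, not necessarily unital, $R$-algebra. A $DP$ algebra is an algebra $A$ with maps $\gamma_n:A\to A$ ($n\ge1$) such that for all $a,b\in A$, $r\in R$, $m,n\ge1$: $\gamma_1(a)=a$; $\gamma_n(a+b)=\gamma_n(a)+\sum_{i+j=n,\,i,j\ge1}\gamma_i(a)\gamma_j(b)+\gamma_n(b)$; $\gamma_n(ab)=a^n\gamma_n(b)$; $\gamma_n(rb)=r^n\gamma_n(b)$; $\gamma_m(a)\gamma_n(a)=\frac{(m+n)!}{m!\,n!}\gamma_{m+n}(a)$; $\gamma_m(\gamma_n(a))=\frac{(mn)!}{m!(n!)^m}\gamma_{mn}(a)$. $\mathbf{DPAlg}_R/A$ is the slice category of $DP$ maps to $A$; $\mathbf{Mod}_A$ is the category of abelian group objects in it, which is equivalent to left $U(A)$-modules $M$ via $M\mapsto(A\oplus M\to A)$.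 $A_+=A\oplus R$ with $(a,r)(b,s)=(ab+sa+rb,rs)$. $U(0)$ is the unital ring generated by $R$ and symbols $\phi_p$ ($p$ prime), commuting with one another, subject to $p\phi_p=0$ and $\phi_pr=r^p\phi_p$; set $\phi_1=1$, $\phi_{p^e}=\phi_p^e$, $\phi_n=0$ for $n>1$ not a prime power. $U(A)$ is the ring with underlying $R$-bimodule $A_+\otimes_RU(0)$ and multiplication $(a\otimes1)(b\otimes1)=ab\otimes1$, $(1\otimes u)(1\otimes v)=1\otimes uv$, $(a\otimes1)(1\otimes u)=a\otimes u$, $(1\otimes\phi_p)(a\otimes1)=0$ ($a,b\in A$). For a left $U(A)$-module $M$, $A\oplus M$ is the $DP$ algebra with $(a,x)(b,y)=(ab,ay+bx)$, $\gamma_n(a,x)=(\gamma_n a,\phi_nx+\sum_{i+j=n,\,i,j\ge1}\gamma_i(a)\phi_j(x))$; a $DP$ derivation $s:A\to M$ is an $R$-linear map such that $a\mapsto(a,s(a))$ is a $DP$ algebra map $A\to A\oplus M$. $\Omega^{DP}_{B/R}$ is the left $U(B)$-module target of the universal $DP$ derivation of $B$. *)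

From mathcomp Require Import all_boot all_order all_algebra.
Set Implicit Arguments. Unset Strict Implicit. Unset Printing Implicit Defensive.
Import GRing.Theory.
Local Open Scope ring_scope.

(* ---------- DP algebras: commutative, not necessarily unital R-algebras
   with divided powers gamma_n (n >= 1; dgam 0 is junk). ---------- *)
Record dpalg (R : comPzRingType) := DPAlg {
  dcar :> lmodType R;
  dmul : dcar -> dcar -> dcar;
  dgam : nat -> dcar -> dcar;
  dmulDl : forall a b c, dmul (a + b) c = dmul a c + dmul b c;
  dmulZl : forall (r : R) a b, dmul (r *: a) b = r *: dmul a b;
  dmulC : forall a b, dmul a b = dmul b a;
  dmulA : forall a b c, dmul a (dmul b c) = dmul (dmul a b) c;
  dgam1 : forall a, dgam 1 a = a;
  dgamD : forall n a b, (0 < n)%N ->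
    dgam n (a + b) = dgam n a + \sum_(1 <= i < n) dmul (dgam i a) (dgam (n - i) b)
                     + dgam n b;
  dgamM : forall n a b, (0 < n)%N -> dgam n (dmul a b) = dmul (iter n.-1 (dmul a) a) (dgam n b);
  dgamZ : forall n (r : R) b, (0 < n)%N -> dgam n (r *: b) = r ^+ n *: dgam n b;
  dgam_mul : forall m n a, (0 < m)%N -> (0 < n)%N ->
    dmul (dgam m a) (dgam n a) = dgam (m + n) a *+ 'C(m + n, m);
  dgam_comp : forall m n a, (0 < m)%N -> (0 < n)%N ->
    dgam m (dgam n a) = dgam (m * n) a *+ ((m * n)`! %/ (m`! * (n`! ^ m)))%N
}.

(* a^n in a non-unital algebra, n >= 1 *)
Definition dpow (R : comPzRingType) (A : dpalg R) (a : A) (n : nat) : A :=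
  iter n.-1 (dmul a) a.

Definition dpmap (R : comPzRingType) (B A : dpalg R) (f : B -> A) : Prop :=
  [/\ forall b b', f (b + b') = f b + f b',
      forall (r : R) b, f (r *: b) = r *: f b,
      forall b b', f (dmul b b') = dmul (f b) (f b')
    & forall n b, (0 < n)%N -> f (dgam n b) = dgam n (f b)].

(* ---------- Left U(A)-modules, written out via the generators of U(A):
   an R-module M, an action of A (i.e. of A (x) 1), and operators phi_p
   (1 (x) phi_p) for primes p, subject to the defining relations of U(A). ---------- *)
Record umod (R : comPzRingType) (A : dpalg R) := UMod {
  mcar :> lmodType R;
  mact : A -> mcar -> mcar;
  mphi : nat -> mcar -> mcar;
  mactDl : forall a a' x, mact (a + a') x = mact a x + mact a' x;
  mactDr : forall a x y, mact a (x + y) = mact a x + mact a y;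
  mactZl : forall (r : R) a x, mact (r *: a) x = r *: mact a x;
  mactZr : forall (r : R) a x, mact a (r *: x) = r *: mact a x;
  mactM : forall a b x, mact (dmul a b) x = mact a (mact b x);
  mphiD : forall p x y, prime p -> mphi p (x + y) = mphi p x + mphi p y;
  mphiZ : forall p (r : R) x, prime p -> mphi p (r *: x) = r ^+ p *: mphi p x;
  mphi_char : forall p x, prime p -> mphi p x *+ p = 0;
  mphiC : forall p q x, prime p -> prime q -> mphi p (mphi q x) = mphi q (mphi p x);
  mphi_act : forall p a x, prime p -> mphi p (mact a x) = 0
}.

Definition phin (R : comPzRingType) (A : dpalg R) (M : umod A) (n : nat) (x : M) : M :=
  if n == 1%N then x
  else if (1 < n)%N && (n == pdiv n ^ logn (pdiv n) n)%N
       then iter (logn (pdiv n) n) (mphi (pdiv n)) x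
       else 0.

Definition ulin (R : comPzRingType) (A : dpalg R) (M N : umod A) (h : M -> N) : Prop :=
  [/\ forall x y, h (x + y) = h x + h y,
      forall (r : R) x, h (r *: x) = r *: h x,
      forall a x, h (mact a x) = mact a (h x)
    & forall p x, prime p -> h (mphi p x) = mphi p (h x)].

(* maps N -> T that are U(B)-linear when the U(A)-module T is viewed as a
   U(B)-module via the ring map U(B) -> U(A) induced by f *)
Definition fsemilin (R : comPzRingType) (B A : dpalg R) (f : B -> A)
    (N : umod B) (T : umod A) (h : N -> T) : Prop :=
  [/\ forall x y, h (x + y) = h x + h y,
      forall (r : R) x, h (r *: x) = r *: h x,
      forall b x, h (mact b x) = mact (f b) (h x)
    & forall p x, prime p -> h (mphi p x) = mphi p (h x)].

(* s : B -> M such that b |-> (f b, s b) is a DP algebra map B -> A (+) M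
   (the square-zero extension), written out componentwise; the first
   component is a DP map because f is. *)
Definition fder (R : comPzRingType) (B A : dpalg R) (f : B -> A) (M : umod A)
    (s : B -> M) : Prop :=
  [/\ forall b b', s (b + b') = s b + s b',
      forall (r : R) b, s (r *: b) = r *: s b,
      forall b b', s (dmul b b') = mact (f b) (s b') + mact (f b') (s b)
    & forall n b, (0 < n)%N ->
        s (dgam n b) = phin n (s b)
                       + \sum_(1 <= i < n) mact (dgam i (f b)) (phin (n - i) (s b))].

(* (M, s) is Ab_A(f : B -> A): the universal arrow from f to the inclusion
   Mod_A -> DPAlg_R/A (an abelian group object A (+) N maps to A). *)
Definition is_Ab (R : comPzRingType) (B A : dpalg R) (f : B -> A) (M : umod A)
    (s : B -> M) : Prop :=
  fder f s /\
  forall (N : umod A) (t : B -> N), fder f t ->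
    (exists h : M -> N, ulin h /\ forall b, h (s b) = t b) /\
    (forall h h' : M -> N, ulin h -> ulin h' ->
       (forall b, h (s b) = t b) -> (forall b, h' (s b) = t b) -> forall x, h x = h' x).

Definition is_Omega (R : comPzRingType) (B : dpalg R) (Om : umod B) (d : B -> Om) : Prop :=
  fder id d /\
  forall (N : umod B) (t : B -> N), fder id t ->
    (exists h : Om -> N, ulin h /\ forall b, h (d b) = t b) /\
    (forall h h' : Om -> N, ulin h -> ulin h' ->
       (forall b, h (d b) = t b) -> (forall b, h' (d b) = t b) -> forall x, h x = h' x).

(* (T, iota) is U(A) (x)_{U(B)} N, characterized by the tensor-hom adjunction
   (extension of scalars along U(B) -> U(A)), with iota = x |-> 1 (x) x. *)
Definition is_base_change (R : comPzRingType) (B A : dpalg R) (f : B -> A)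
    (N : umod B) (T : umod A) (iota : N -> T) : Prop :=
  fsemilin f iota /\
  forall (T' : umod A) (j : N -> T'), fsemilin f j ->
    (exists h : T -> T', ulin h /\ forall x, h (iota x) = j x) /\
    (forall h h' : T -> T', ulin h -> ulin h' ->
       (forall x, h (iota x) = j x) -> (forall x, h' (iota x) = j x) -> forall y, h y = h' y).

From mathcomp Require Import all_boot all_order all_algebra.
Set Implicit Arguments. Unset Strict Implicit. Unset Printing Implicit Defensive.
Import GRing.Theory.
Local Open Scope ring_scope.

(* Both sides of the isomorphism are universal arrows from f to Mod_A.  A DP
   derivation t : B -> N along f is the same as a DP derivation of B into N
   viewed as a U(B)-module by restriction of scalars, so it factors uniquely
   through d_B : B -> Omega_B by a U(B)-linear map, which in turn extends
   uniquely to a U(A)-linear map on U(A) (x)_{U(B)} Omega_B.  Hence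
   iota \o d_B has the universal property of Ab_A(f), and universal arrows
   are unique up to isomorphism. *)

Section DPModules.
Variable R : comPzRingType.

Lemma additive_map0 (U V : zmodType) (j : U -> V) :
  (forall x y, j (x + y) = j x + j y) -> j 0 = 0.
Proof. by move=> jD; apply: (@addrI _ (j 0)); rewrite -jD !addr0. Qed.

Lemma phin_morph (A B : dpalg R) (N : umod B) (T : umod A) (j : N -> T) :
  (forall x y, j (x + y) = j x + j y) ->
  (forall p x, prime p -> j (mphi p x) = mphi p (j x)) ->
  forall n x, j (phin n x) = phin n (j x).
Proof.
move=> jD jphi n x; rewrite /phin; case: ifP => // _.
case: ifP => [/andP[n_gt1 _] | _]; last exact: additive_map0.
have p_pr := pdiv_prime n_gt1.
by elim: (logn _ _) => //= k IHk; rewrite jphi // IHk.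
Qed.

Section DPMap.
Variables (A B : dpalg R) (f : B -> A).
Hypothesis f_dp : dpmap f.

Lemma dpmapD b b' : f (b + b') = f b + f b'. Proof. by case: f_dp. Qed.
Lemma dpmapZ (r : R) b : f (r *: b) = r *: f b. Proof. by case: f_dp. Qed.
Lemma dpmapM b b' : f (dmul b b') = dmul (f b) (f b'). Proof. by case: f_dp. Qed.
Lemma dpmapG n b : (0 < n)%N -> f (dgam n b) = dgam n (f b).
Proof. by case: f_dp => _ _ _; apply. Qed.

(* Restriction of scalars along U(B) -> U(A): a U(B)-linear map into
   [umod_restr N] is, by conversion, an [fsemilin f] map into N. *)
Definition umod_restr (N : umod A) : umod B :=
  @UMod R B (mcar N) (fun b x => mact (f b) x) (@mphi _ _ N)
   (fun b b' x => etrans (f_equal (fun a => mact a x) (dpmapD b b')) (mactDl _ _ _))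
   (fun b x y => mactDr _ _ _)
   (fun r b x => etrans (f_equal (fun a => mact a x) (dpmapZ r b)) (mactZl _ _ _))
   (fun r b x => mactZr _ _ _)
   (fun b b' x => etrans (f_equal (fun a => mact a x) (dpmapM b b')) (mactM _ _ _))
   (fun p x y p_pr => mphiD x y p_pr)
   (fun p r x p_pr => mphiZ r x p_pr)
   (fun p x p_pr => mphi_char x p_pr)
   (fun p q x p_pr q_pr => mphiC x p_pr q_pr)
   (fun p b x p_pr => mphi_act (f b) x p_pr).

Lemma fder_restr (N : umod A) (t : B -> N) :
  fder f t -> @fder R B B id (umod_restr N) t.
Proof.
case=> tD tZ tM tG; split=> // n b n_gt0; rewrite tG //; congr (_ + _).
by apply: eq_big_nat => i /andP[i_gt0 _] /=; rewrite dpmapG.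
Qed.

Lemma fder_fsemilin_comp (N : umod B) (T : umod A) (j : N -> T) (d : B -> N) :
  fsemilin f j -> fder id d -> fder f (fun b => j (d b)).
Proof.
case=> jD jZ jact jphi [dD dZ dM dG]; split.
- by move=> b b'; rewrite dD jD.
- by move=> r b; rewrite dZ jZ.
- by move=> b b'; rewrite dM jD !jact.
- move=> n b n_gt0; rewrite dG // jD (phin_morph jD jphi); congr (_ + _).
  rewrite (big_morph j jD (additive_map0 jD)).
  by apply: eq_big_nat => i /andP[i_gt0 _]; rewrite jact (phin_morph jD jphi) dpmapG.
Qed.

End DPMap.

Lemma ulin_comp (A : dpalg R) (M N P : umod A) (h : M -> N) (g : N -> P) :
  ulin h -> ulin g -> ulin (fun x => g (h x)).
Proof.
case=> hD hZ hact hphi [gD gZ gact gphi]; split=> *.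
- by rewrite hD gD.
- by rewrite hZ gZ.
- by rewrite hact gact.
- by rewrite hphi // gphi.
Qed.

Lemma ulin_id (A : dpalg R) (M : umod A) : ulin (fun x : M => x).
Proof. by split. Qed.

Lemma ulin_fsemilin_comp (A B : dpalg R) (f : B -> A) (N : umod B) (T T' : umod A)
    (j : N -> T) (g : T -> T') :
  fsemilin f j -> ulin g -> fsemilin f (fun x => g (j x)).
Proof.
case=> jD jZ jact jphi [gD gZ gact gphi]; split=> *.
- by rewrite jD gD.
- by rewrite jZ gZ.
- by rewrite jact gact.
- by rewrite jphi // gphi.
Qed.

Lemma is_Ab_unique (A B : dpalg R) (f : B -> A) (M M' : umod A)
    (s : B -> M) (s' : B -> M') :
  is_Ab f s -> is_Ab f s' -> exists h : M -> M', ulin h /\ bijective h.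
Proof.
move=> [s_der s_univ] [s'_der s'_univ].
have [[h [h_lin hs]] _] := s_univ _ _ s'_der.
have [[g [g_lin gs']] _] := s'_univ _ _ s_der.
exists h; split=> //; exists g => x.
- apply: (s_univ _ _ s_der).2 (ulin_comp h_lin g_lin) (ulin_id M) _ _ x => // b.
  by rewrite hs gs'.
- apply: (s'_univ _ _ s'_der).2 (ulin_comp g_lin h_lin) (ulin_id M') _ _ x => // b.
  by rewrite gs' hs.
Qed.

Lemma base_change_is_Ab (A B : dpalg R) (f : B -> A) (f_dp : dpmap f)
    (OmB : umod B) (dB : B -> OmB) (T : umod A) (iota : OmB -> T) :
  is_Omega dB -> is_base_change f iota -> is_Ab f (fun b => iota (dB b)).
Proof.
move=> [dB_der Om_univ] [iota_lin T_univ].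
split; first exact: fder_fsemilin_comp.
move=> N t t_der.
have [[h0 [h0_lin h0dB]] _] := Om_univ _ _ (fder_restr f_dp t_der).
have [[h [h_lin hiota]] _] := T_univ (N : umod A) _ h0_lin.
split; first by exists h; split=> // b; rewrite hiota h0dB.
move=> g g' g_lin g'_lin gt g't.
have giota_lin := ulin_fsemilin_comp iota_lin g_lin.
have g'iota_lin := ulin_fsemilin_comp iota_lin g'_lin.
apply: (T_univ _ _ giota_lin).2 => // x.
have giotadB_der := fder_fsemilin_comp f_dp giota_lin dB_der.
apply: (Om_univ _ _ (fder_restr f_dp giotadB_der)).2 g'iota_lin giota_lin _ _ x
  => // b.
by rewrite gt g't.
Qed.

End DPModules.

Theorem mainTheorem11 (R : comPzRingType) (A B : dpalg R) (f : B -> A) (hf : dpmap f)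
  (OmB : umod B) (dB : B -> OmB) (hOmB : is_Omega dB)
  (T : umod A) (iota : OmB -> T) (hT : is_base_change f iota)
  (M : umod A) (s : B -> M) (hM : is_Ab f s) :
  (exists h : M -> T, ulin h /\ bijective h) /\
  (forall (OmA : umod A) (dA : A -> OmA), is_Omega dA ->
   forall (MA : umod A) (sA : A -> MA), is_Ab id sA ->
   exists h : MA -> OmA, ulin h /\ bijective h).
Proof.
split; first exact: is_Ab_unique hM (base_change_is_Ab hf hOmB hT).
move=> OmA dA OmA_univ MA sA MA_univ.
(* [is_Omega dA] unfolds to [is_Ab id dA]. *)
exact: is_Ab_unique MA_univ OmA_univ.
Qed.
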